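(* For every nonnegative integer $n$, $$\sum_{k=0}^{\infty}(-1)^k(4k+1)\,\frac{(-n)_k\,(-3n-1)_k\,(\tfrac12)_k}{k!\,(n+\tfrac32)_k\,(3n+\tfrac52)_k}=\left(\frac{3^3}{2^8}\right)^n\frac{(\tfrac76)_n(\tfrac56)_n(\tfrac32)_n^2}{(\tfrac58)_n(\tfrac78)_n(\tfrac98)_n(\tfrac{11}{8})_n}.$$ (The sum is finite, since $(-n)_k=0$ for $k>n$.)
   Context: $(a)_j=\Gamma(a+j)/\Gamma(a)=a(a+1)\cdots(a+j-1)$ denotes the rising factorial (Pochhammer symbol), with $(a)_0=1$. *)

From HB Require Import structures.
From mathcomp Require Import all_boot all_order all_algebra.
Set Implicit Arguments. Unset Strict Implicit. Unset Printing Implicit Defensive.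
Import Order.TTheory GRing.Theory Num.Theory.
Local Open Scope ring_scope.

Definition poch (R : ringType) (a : R) (j : nat) : R :=
  \prod_(i < j) (a + i%:R).

From HB Require Import structures.
From mathcomp Require Import all_boot all_order all_algebra ring lra.
Set Implicit Arguments. Unset Strict Implicit. Unset Printing Implicit Defensive.
Import Order.TTheory GRing.Theory Num.Theory.
Local Open Scope ring_scope.

(* The sum S(n) = sum_k F(n,k), with F the summand below, is evaluated by the
   Wilf-Zeilberger method.  Both S(n) and the closed form T(n) satisfy the
   first-order recurrence  a(n) X(n+1) = b(n) X(n)  with
     a(n) = (8n+5)(8n+7)(8n+9)(8n+11),   b(n) = 3(6n+5)(6n+7)(2n+3)^2,
   and S(0) = T(0) = 1, so they coincide.  For T the recurrence is read off
   the Pochhammer symbols.  For S it comes from creative telescoping: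
     a(n) F(n+1,k) - b(n) F(n,k) = G(n,k+1) - G(n,k),
   where G(n,k) = H(n+1,k) R(n,k), H is F stripped of its factor (4k+1), and
   R is an explicit rational certificate.  Dividing by H(n+1,k) turns this
   into an identity between rational functions of N = n and K = k, checked
   by 'field', once the ratios H(n,k+1)/H(n,k) and H(n,k)/H(n+1,k) are
   computed from the shift rules of Pochhammer symbols.  Summing over k, the
   right-hand side telescopes to G(n,n+2) - G(n,0) = 0. *)

Section Pochhammer.
Variable R : nzRingType.
Implicit Types (a : R) (k m : nat).

Lemma poch0 a : poch a 0 = 1.
Proof. by rewrite /poch big_ord0. Qed.

Lemma pochS a k : poch a k.+1 = poch a k * (a + k%:R).
Proof. by rewrite /poch big_ord_recr. Qed.

Lemma pochD a k m : poch a (k + m) = poch a k * poch (a + k%:R) m.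
Proof.
rewrite /poch big_split_ord /=; congr (_ * _); apply: eq_bigr => i _.
by rewrite natrD addrA.
Qed.

(* (-m)_(m+1) = 0: this makes the sum of the theorem terminate. *)
Lemma poch_neg_nat m : poch (- (m%:R : R)) m.+1 = 0.
Proof. by rewrite pochS addNr mulr0. Qed.

End Pochhammer.

Lemma poch_gt0 (R : numDomainType) (a : R) k : 0 < a -> 0 < poch a k.
Proof.
move=> a_gt0; rewrite /poch; apply: prodr_gt0 => i _.
exact: ltr_wpDr (ler0n _ _) a_gt0.
Qed.

Lemma poch_neq0_neg (R : realDomainType) (a : R) m : a + m%:R < 1 -> poch a m != 0.
Proof.
move=> a_lt; apply/prodf_neq0 => i _; apply: ltr0_neq0.
have : i.+1%:R <= m%:R :> R by rewrite ler_nat.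
by rewrite -natr1; lra.
Qed.

(* Shifting the base of (a)_k by m, from (a)_(k+m) = (a)_m (a+m)_k. *)
Lemma poch_shift (F : fieldType) (a b : F) m k :
  b = a + m%:R -> poch a m != 0 -> poch b k = poch a k * poch (a + k%:R) m / poch a m.
Proof.
move=> -> am_neq0; apply: (mulIf am_neq0); rewrite divfK // mulrC -pochD.
by rewrite addnC pochD.
Qed.

Lemma telescoping_recurrence (R : pzRingType) (a b : R) (F1 F0 G : nat -> R) m :
  (forall k, a * F1 k - b * F0 k = G k.+1 - G k) -> G 0 = 0 -> G m = 0 ->
  a * \sum_(k < m) F1 k = b * \sum_(k < m) F0 k.
Proof.
move=> pairFG G0 Gm; apply/eqP; rewrite -subr_eq0 !mulr_sumr -sumrB.
under eq_bigr do rewrite pairFG.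
by rewrite -(big_mkord xpredT (fun k => G k.+1 - G k)) telescope_sumr // Gm G0 subr0.
Qed.

Lemma recurrence_unique (F : idomainType) (a b u v : nat -> F) :
  (forall n, a n != 0) ->
  (forall n, a n * u n.+1 = b n * u n) -> (forall n, a n * v n.+1 = b n * v n) ->
  u 0 = v 0 -> forall n, u n = v n.
Proof.
move=> a_neq0 rec_u rec_v uv0; elim=> [//|n IH].
by apply: (mulfI (a_neq0 n)); rewrite rec_u rec_v IH.
Qed.

(* The rational part of the WZ pair, in rational variables N = n and K = k.
   wz_a and wz_b are the coefficients of the recurrence, ratio_k N K is the
   ratio H(n,k+1)/H(n,k), ratio_n N K the ratio H(n,k)/H(n+1,k), and cert the
   certificate R(n,k).  The polynomial cert_poly has coefficients too large
   for unary numerals; those are written as casts of (binary) naturals. *)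
Section WZCertificate.
Implicit Types N K : rat.

Definition wz_a N : rat := (8 * N + 5) * (8 * N + 7) * (8 * N + 9) * (8 * N + 11).
Definition wz_b N : rat := 3 * (6 * N + 5) * (6 * N + 7) * (2 * N + 3) ^+ 2.

Definition ratio_k N K : rat :=
  - ((K - N) * (K - 3 * N - 1) * (2 * K + 1))
  / (2 * (K + 1) * (K + N + 3 / 2) * (K + 3 * N + 5 / 2)).

Definition ratio_n N K : rat :=
  (N + 1 - K) * (3 * N + 2 - K) * (3 * N + 3 - K) * (3 * N + 4 - K)
  * (2 * N + 2 * K + 3) * (6 * N + 2 * K + 5) * (6 * N + 2 * K + 7) * (6 * N + 2 * K + 9)
  / ((N + 1) * (3 * N + 2) * (3 * N + 3) * (3 * N + 4)
     * (2 * N + 3) * (6 * N + 5) * (6 * N + 7) * (6 * N + 9)).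

Definition cert_poly N K : rat :=
  - (8470 + N * (58774%:R + N * (167522%:R + N * (251126%:R
       + N * (208908%:R + N * (91488%:R + N * 16488))))))
  + K * (- (963 + N * (4286 + N * (7138 + N * (5264 + N * 1452))))
  + K * (1872 + N * (8460 + N * (14214 + N * (10528 + N * 2904)))
  + K * (215 + N * (448 + N * 248)
  + K * (- (210 + N * (448 + N * 248))
  + K * (- 12 + K * 8))))).

Definition cert N K : rat :=
  K * (2 * N + 2 * K + 3) * (6 * N + 2 * K + 9)
  / ((N + 1) * (3 * N + 2) * (3 * N + 3) * (3 * N + 4)) * cert_poly N K.

(* The WZ equation divided by H(n+1,k): a rational function identity, valid
   wherever the denominators are nonzero, in particular for N, K >= 0. *)
Lemma wz_rational_identity N K : 0 <= N -> 0 <= K ->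
  (4 * K + 1) * (wz_a N - wz_b N * ratio_n N K)
  = ratio_k (N + 1) K * cert N (K + 1) - cert N K.
Proof.
move=> N_ge0 K_ge0; rewrite /wz_a /wz_b /ratio_k /ratio_n /cert /cert_poly.
by field; repeat (apply/andP; split); lra.
Qed.

Lemma cert_K0 N : cert N 0 = 0.
Proof. by rewrite /cert !mul0r. Qed.

Lemma wz_a_neq0 n : wz_a n%:R != 0.
Proof.
have N_ge0 : 0 <= n%:R :> rat by [].
by rewrite /wz_a !mulf_neq0 //; lra.
Qed.

End WZCertificate.

Definition wz_term (n k : nat) : rat :=
  (-1) ^+ k * (4 * k%:R + 1) *
  (poch (- n%:R) k * poch (- (3 * n%:R) - 1) k * poch (1 / 2) k)
  / (k`!%:R * poch (n%:R + 3 / 2) k * poch (3 * n%:R + 5 / 2) k).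

Definition hyper (n k : nat) : rat :=
  (-1) ^+ k *
  (poch (- n%:R) k * poch (- (3 * n%:R) - 1) k * poch (1 / 2) k)
  / (k`!%:R * poch (n%:R + 3 / 2) k * poch (3 * n%:R + 5 / 2) k).

Lemma wz_term_hyper n k : wz_term n k = (4 * k%:R + 1) * hyper n k.
Proof. by rewrite /wz_term /hyper; ring. Qed.

Lemma hyper_denom_neq0 n k :
  [/\ k`!%:R != 0 :> rat, poch (n%:R + 3 / 2) k != 0 :> rat
      & poch (3 * n%:R + 5 / 2) k != 0 :> rat].
Proof.
have N_ge0 : 0 <= n%:R :> rat by [].
by split; rewrite ?pnatr_eq0 -?lt0n ?fact_gt0 // lt0r_neq0 // poch_gt0 //; lra.
Qed.

(* H is hypergeometric in k ... *)
Lemma hyper_succ_k n k : hyper n k.+1 = hyper n k * ratio_k n%:R k%:R.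
Proof.
have N_ge0 : 0 <= n%:R :> rat by [].
have K_ge0 : 0 <= k%:R :> rat by [].
have [fact_neq0 poch1_neq0 poch2_neq0] := hyper_denom_neq0 n k.
rewrite /hyper /ratio_k !pochS exprS factS natrM -[k.+1%:R]natr1.
by field; rewrite fact_neq0 poch1_neq0 poch2_neq0 ?andbT ?andTb;
  repeat (apply/andP; split); lra.
Qed.

(* ... and in n: each Pochhammer symbol of H(n,k) or H(n+1,k) whose base is
   shifted by 1 or 3 between the two is expressed through the other one. *)
Lemma hyper_pred_n n k : hyper n k = hyper n.+1 k * ratio_n n%:R k%:R.
Proof.
set N : rat := n%:R; set K : rat := k%:R.
have N_ge0 : 0 <= N by [].
have K_ge0 : 0 <= K by [].
have [fact_neq0 poch1_neq0 poch2_neq0] := hyper_denom_neq0 n k.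
rewrite /hyper -[n.+1%:R]natr1 -/N.
rewrite (@poch_shift _ (- (N + 1)) (- N) 1); first last.
- by apply: poch_neq0_neg; lra.
- by ring.
rewrite (@poch_shift _ (- (3 * (N + 1)) - 1) (- (3 * N) - 1) 3); first last.
- by apply: poch_neq0_neg; lra.
- by ring.
rewrite (@poch_shift _ (N + 3 / 2) (N + 1 + 3 / 2) 1); first last.
- by rewrite lt0r_neq0 // poch_gt0 //; lra.
- by ring.
rewrite (@poch_shift _ (3 * N + 5 / 2) (3 * (N + 1) + 5 / 2) 3); first last.
- by rewrite lt0r_neq0 // poch_gt0 //; lra.
- by ring.
rewrite /ratio_n !pochS !poch0.
by field; rewrite fact_neq0 poch1_neq0 poch2_neq0 ?andbT ?andTb;
  repeat (apply/andP; split); lra.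
Qed.

Definition wz_G (n k : nat) : rat := hyper n.+1 k * cert n%:R k%:R.

Lemma wz_pair n k :
  wz_a n%:R * wz_term n.+1 k - wz_b n%:R * wz_term n k = wz_G n k.+1 - wz_G n k.
Proof.
have identity := @wz_rational_identity n%:R k%:R (ler0n _ n) (ler0n _ k).
rewrite /wz_G !wz_term_hyper (hyper_pred_n n k) hyper_succ_k.
rewrite -[n.+1%:R]natr1 -[k.+1%:R]natr1.
(* Abstract the factors, so that 'ring' does not unfold the certificate. *)
move: identity; move: (hyper _ _) (wz_a _) (wz_b _) (ratio_n _ _) (ratio_k _ _).
move: (cert _ _) (cert _ (_ + 1)) => cert_cur cert_next B a b rn rk identity.
transitivity (B * ((4 * k%:R + 1) * (a - b * rn))); first by ring.
by rewrite identity; ring.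
Qed.

Definition wz_sum (n : nat) : rat := \sum_(k < n.+1) wz_term n k.

Lemma wz_sum_step n : wz_a n%:R * wz_sum n.+1 = wz_b n%:R * wz_sum n.
Proof.
have term_last : wz_term n n.+1 = 0.
  by rewrite /wz_term (poch_neg_nat _ n) !mul0r mulr0 mul0r.
have G_last : wz_G n n.+2 = 0.
  by rewrite /wz_G /hyper (poch_neg_nat _ n.+1) !mul0r mulr0 !mul0r.
have G0 : wz_G n 0 = 0 by rewrite /wz_G mulr0n cert_K0 mulr0.
have sum_ext : wz_sum n = \sum_(k < n.+2) wz_term n k.
  by rewrite /wz_sum [RHS]big_ord_recr /= term_last addr0.
by rewrite sum_ext; apply: telescoping_recurrence (wz_pair n) G0 G_last.
Qed.

Lemma wz_sum0 : wz_sum 0 = 1.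
Proof. by rewrite /wz_sum big_ord1 /wz_term !poch0 /= expr0 mulr0 add0r !mul1r. Qed.

Definition closed_form (n : nat) : rat :=
  (3 ^+ 3 / 2 ^+ 8) ^+ n
  * (poch (7 / 6) n * poch (5 / 6) n * poch (3 / 2) n ^+ 2)
  / (poch (5 / 8) n * poch (7 / 8) n * poch (9 / 8) n * poch (11 / 8) n).

Lemma closed_form_step n : wz_a n%:R * closed_form n.+1 = wz_b n%:R * closed_form n.
Proof.
have N_ge0 : 0 <= n%:R :> rat by [].
have [p5 p7 p9 p11] : [/\ poch (5 / 8 : rat) n != 0, poch (7 / 8 : rat) n != 0,
    poch (9 / 8 : rat) n != 0 & poch (11 / 8 : rat) n != 0].
  by split; apply/lt0r_neq0/poch_gt0; lra.
rewrite /closed_form /wz_a /wz_b !pochS exprS.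
by field; rewrite p11 p9 p7 p5 !andTb; repeat (apply/andP; split); lra.
Qed.

Lemma closed_form0 : closed_form 0 = 1.
Proof. by rewrite /closed_form !poch0 expr0 expr1n !mul1r ?invr1. Qed.

Theorem theorem4 (n : nat) :
  \sum_(k < n.+1)
     (-1) ^+ k * (4 * k%:R + 1) *
     (poch (- n%:R) k * poch (- (3 * n%:R) - 1) k * poch (1 / 2) k)
     / (k`!%:R * poch (n%:R + 3 / 2) k * poch (3 * n%:R + 5 / 2) k)
  = ((3 ^+ 3 / 2 ^+ 8) ^+ n
     * (poch (7 / 6) n * poch (5 / 6) n * poch (3 / 2) n ^+ 2)
     / (poch (5 / 8) n * poch (7 / 8) n * poch (9 / 8) n * poch (11 / 8) n)
     : rat).
Proof.
have sum_eq_closed_form : forall m, wz_sum m = closed_form m.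
  apply: (recurrence_unique wz_a_neq0 wz_sum_step closed_form_step).
  by rewrite wz_sum0 closed_form0.
exact: sum_eq_closed_form n.
Qed.
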